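(* For every $G\subseteq A$ and every $\varphi\in\mathcal{L}_{CoRGAL}$, the formula $\langle[G]\rangle\langle[G]\rangle\varphi\rightarrow[\langle A\setminus G\rangle]\varphi$ is valid.
   Context: Fix a finite set $A$ of agents and a countable set $P$ of propositional variables. The language $\mathcal{L}_{CoRGAL}$ is given by $\varphi ::= p \mid \neg\varphi \mid (\varphi\wedge\varphi) \mid K_a\varphi \mid [\varphi]\varphi \mid [G,\varphi]\varphi \mid [\langle G\rangle]\varphi$ with $p\in P$, $a\in A$, $G\subseteq A$. $\mathcal{L}_{EL}$ is the fragment built only from $p,\neg,\wedge,K_a$. Duals: $\langle\psi\rangle\varphi:=\neg[\psi]\neg\varphi$, $\langle[G]\rangle\varphi:=\neg[\langle G\rangle]\neg\varphi$. For $G\subseteq A$, $\mathcal{L}^G_{EL}$ is the set of formulas $\bigwedge_{i\in G}K_i\varphi_i$ with each $\varphi_i\in\mathcal{L}_{EL}$; $\psi_G,\chi_G$ range over $\mathcal{L}^G_{EL}$. Epistemic models $M=(W,\sim,V)$: $W\neq\emptyset$, each $\sim_a$ an equivalence relation, $V:P\to\mathcal{P}(W)$; $M^\varphi$ is the restriction of $M$ to $\{v:(M,v)\models\varphi\}$. Semantics: standard for $p,\neg,\wedge,K_a$; $(M,w)\models[\varphi]\psi$ iff $(M,w)\models\varphi$ implies $(M^\varphi,w)\models\psi$; $(M,w)\models[G,\chi]\varphi$ iff $(M,w)\models\chi$ and for all $\psi_G$, $(M,w)\models[\psi_G\wedge\chi]\varphi$; $(M,w)\models[\langle G\rangle]\varphi$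 iff for every $\psi_G$ there is $\chi_{A\setminus G}$ with $(M,w)\models\psi_G\to\langle\psi_G\wedge\chi_{A\setminus G}\rangle\varphi$. Thus $(M,w)\models\langle[G]\rangle\varphi$ iff there is $\psi_G$ such that for all $\chi_{A\setminus G}$, $(M,w)\models\psi_G\wedge[\psi_G\wedge\chi_{A\setminus G}]\varphi$. A formula is valid if true at every pointed model. *)

From mathcomp Require Import all_boot.
Set Implicit Arguments. Unset Strict Implicit. Unset Printing Implicit Defensive.

(* Propositional variables: the countable set P is taken to be nat. *)
Definition prop_var := nat.

Section Syntax.
Variable A : finType.

Inductive form : Type :=
| Var  : prop_var -> form
| Neg  : form -> form
| And  : form -> form -> form
| K    : A -> form -> form
| Ann  : form -> form -> form
| GAnn : {set A} -> form -> form -> form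
| Coal : {set A} -> form -> form.

Inductive elform : Type :=
| EVar : prop_var -> elform
| ENeg : elform -> elform
| EAnd : elform -> elform -> elform
| EK   : A -> elform -> elform.

Definition Imp (phi psi : form) : form := Neg (And phi (Neg (psi))).
Definition DAnn (psi phi : form) : form := Neg (Ann psi (Neg phi)).
Definition DCoal (G : {set A}) (phi : form) : form := Neg (Coal G (Neg phi)).
End Syntax.

Record model (A : finType) : Type := Model {
  W : Type;
  R : A -> W -> W -> Prop;
  R_refl : forall a x, R a x x;
  R_sym : forall a x y, R a x y -> R a y x;
  R_trans : forall a x y z, R a x y -> R a y z -> R a x z;
  V : prop_var -> W -> Prop
}.
Arguments W {A} m.
Arguments R {A} m a _ _.
Arguments V {A} m p _.

Definition restrict (A : finType) (M : model A) (S : W M -> Prop) : model A.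
Proof.
refine (@Model A {w : W M | S w}
          (fun a u v => R M a (proj1_sig u) (proj1_sig v)) _ _ _
          (fun p u => V M p (proj1_sig u))).
- by move=> a x; apply: R_refl.
- by move=> a x y; apply: R_sym.
- by move=> a x y z; apply: R_trans.
Defined.

Arguments restrict {A} M S.

Fixpoint sat_el (A : finType) (M : model A) (phi : elform A) (w : W M) : Prop :=
  match phi with
  | EVar p => V M p w
  | ENeg f => ~ @sat_el A M f w
  | EAnd f g => @sat_el A M f w /\ @sat_el A M g w
  | EK a f => forall v, R M a w v -> @sat_el A M f v
  end.

Arguments sat_el {A} M phi w.

(* A formula psi_G of L^G_EL = /\_{i in G} K_i phi_i is given by the family
   f : A -> elform A (phi_i := f i; only the values on G matter).
   Its truth: *)
Definition satG (A : finType) (M : model A) (G : {set A}) (f : A -> elform A)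
  (w : W M) : Prop :=
  forall i, i \in G -> sat_el M (EK i (f i)) w.

Arguments satG {A} M G f w.

Fixpoint sat (A : finType) (phi : form A) : forall M : model A, W M -> Prop :=
  match phi with
  | Var p => fun M w => V M p w
  | Neg f => fun M w => ~ @sat A f M w
  | And f g => fun M w => @sat A f M w /\ @sat A g M w
  | K a f => fun M w => forall v, R M a w v -> @sat A f M v
  | Ann psi f => fun M w =>
      forall H : @sat A psi M w, @sat A f (restrict M (@sat A psi M)) (exist _ w H)
  | GAnn G chi f => fun M w =>
      @sat A chi M w /\
      forall (psiG : A -> elform A) (H : satG M G psiG w /\ @sat A chi M w),
        @sat A f (restrict M (fun v => satG M G psiG v /\ @sat A chi M v)) (exist _ w H)
  | Coal G f => fun M w =>
      forall (psiG : A -> elform A) (Hpsi : satG M G psiG w),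
        exists (chi : A -> elform A) (Hchi : satG M (~: G) chi w),
          @sat A f (restrict M (fun v => satG M G psiG v /\ satG M (~: G) chi v))
                (exist _ w (conj Hpsi Hchi))
  end.

Arguments sat {A} phi M w.

Definition valid (A : finType) (phi : form A) : Prop :=
  forall (M : model A) (w : W M), sat phi M w.

From mathcomp Require Import all_boot.
From Stdlib Require Import Classical.
Set Implicit Arguments.

(* Suppose <[G]><[G]>phi holds at (M, w) and the opponent announces psi for
   A \ G.  The outer witness psiG for G, played against psi, leads to
   M1 = M^{psiG /\ psi}, in which the inner witness psi2 for G, played against
   the trivial announcement, makes phi true.  Relativizing psi2 to the first
   announcement t gives a single G-announcement chi_i = psiG_i /\ psi2_i^t in M,
   and M^{psi /\ chi} is isomorphic to the two-step update (M1)^{psi2}.  Truth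
   is invariant under surjective strong homomorphisms, so phi holds in
   M^{psi /\ chi}, as [<A \ G>]phi requires. *)

Section CoalitionAnnouncements.
Variable A : finType.
Implicit Types M N : model A.

Definition strong_epi M N (f : W M -> W N) :=
  [/\ forall y, exists x, f x = y,
      forall a x y, R M a x y <-> R N a (f x) (f y)
    & forall p x, V M p x <-> V N p (f x)].

Lemma sat_el_strong_epi M N f : strong_epi M N f ->
  forall phi x, sat_el M phi x <-> sat_el N phi (f x).
Proof.
case=> f_surj f_R f_V; elim=> [p|g IH|g IHg h IHh|a g IH] x /=.
- exact: f_V.
- by rewrite IH.
- by rewrite IHg IHh.
- split=> H v.
  + by case: (f_surj v) => u <- Rv; rewrite -IH; apply: H; rewrite f_R.
  + by move=> Rv; rewrite IH; apply: H; rewrite -f_R.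
Qed.

Lemma satG_strong_epi M N f : strong_epi M N f ->
  forall G psi x, satG M G psi x <-> satG N G psi (f x).
Proof.
move=> f_epi G psi x.
by split=> H i Gi; have := H i Gi; rewrite (sat_el_strong_epi f_epi (EK i _)).
Qed.

Definition restrict_map M N f (P : W M -> Prop) (Q : W N -> Prop)
    (PQ : forall x, P x <-> Q (f x)) (u : W (restrict M P)) : W (restrict N Q) :=
  exist Q (f (sval u)) (proj1 (PQ _) (svalP u)).

Lemma restrict_map_strong_epi M N f P Q (PQ : forall x, P x <-> Q (f x)) :
  strong_epi M N f -> strong_epi _ _ (@restrict_map M N f P Q PQ).
Proof.
case=> f_surj f_R f_V; split.
- case=> y Qy; case: (f_surj y) => x fx; subst y.
  exists (exist P x (proj2 (PQ x) Qy)).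
  by congr exist; apply: proof_irrelevance.
- by move=> a [x Px] [y Py]; apply: f_R.
- by move=> p [x Px]; apply: f_V.
Qed.

Lemma sat_exist_irr phi M (P : W M -> Prop) x (H H' : P x) :
  sat phi (restrict M P) (exist P x H) <-> sat phi (restrict M P) (exist P x H').
Proof. by rewrite (proof_irrelevance _ H H'). Qed.

Definition epi_invariant (phi : form A) :=
  forall M N f, strong_epi M N f -> forall x, sat phi M x <-> sat phi N (f x).

Lemma epi_invariant_restrict phi M N f (P : W M -> Prop) (Q : W N -> Prop) :
  epi_invariant phi -> strong_epi M N f -> (forall x, P x <-> Q (f x)) ->
  forall x (H : P x) (H' : Q (f x)),
  sat phi (restrict M P) (exist P x H) <-> sat phi (restrict N Q) (exist Q (f x) H').
Proof.
move=> phi_inv f_epi PQ x H H'.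
rewrite (phi_inv _ _ _ (restrict_map_strong_epi _ _ PQ f_epi)).
exact: sat_exist_irr.
Qed.

Lemma sat_strong_epi phi : epi_invariant phi.
Proof.
elim: phi => [p|g IH|g IHg h IHh|a g IH|psi IHpsi g IH|G chi IHchi g IH|G g IH]
  M N f f_epi x /=.
- by case: f_epi => _ _; apply.
- by rewrite (IH _ _ _ f_epi).
- by rewrite (IHg _ _ _ f_epi) (IHh _ _ _ f_epi).
- have [f_surj f_R _] := f_epi; split=> H v.
  + by case: (f_surj v) => u <- Rv; rewrite -(IH _ _ _ f_epi); apply: H; rewrite f_R.
  + by move=> Rv; rewrite (IH _ _ _ f_epi); apply: H; rewrite -f_R.
- have PQ y := IHpsi _ _ _ f_epi y.
  split=> H Hpsi.
  + exact: (proj1 (epi_invariant_restrict _ _ IH f_epi PQ _ _ _) (H (proj2 (PQ x) Hpsi))).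
  + exact: (proj2 (epi_invariant_restrict _ _ IH f_epi PQ _ _ _) (H (proj1 (PQ x) Hpsi))).
- have PQ ps y : satG M G ps y /\ sat chi M y <-> satG N G ps (f y) /\ sat chi N (f y).
    by rewrite (satG_strong_epi f_epi) (IHchi _ _ _ f_epi).
  split=> -[Hchi H]; split; try by rewrite (IHchi _ _ _ f_epi) in Hchi *.
  + move=> ps Hps; have Hps' := proj2 (PQ ps x) Hps.
    exact: (proj1 (epi_invariant_restrict _ _ IH f_epi (PQ ps) _ _ _) (H ps Hps')).
  + move=> ps Hps; have Hps' := proj1 (PQ ps x) Hps.
    exact: (proj2 (epi_invariant_restrict _ _ IH f_epi (PQ ps) _ _ _) (H ps Hps')).
- have PQ ps ch y : satG M G ps y /\ satG M (~: G) ch y <->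
                    satG N G ps (f y) /\ satG N (~: G) ch (f y).
    by rewrite !(satG_strong_epi f_epi).
  split=> H ps Hps.
  + have [ch [Hch Hg]] := H ps (proj2 (satG_strong_epi f_epi G ps x) Hps).
    exists ch, (proj1 (satG_strong_epi f_epi _ ch x) Hch).
    exact: (proj1 (epi_invariant_restrict _ _ IH f_epi (PQ ps ch) _ _ _) Hg).
  + have [ch [Hch Hg]] := H ps (proj1 (satG_strong_epi f_epi G ps x) Hps).
    exists ch, (proj2 (satG_strong_epi f_epi _ ch x) Hch).
    exact: (proj2 (epi_invariant_restrict _ _ IH f_epi (PQ ps ch) _ _ _) Hg).
Qed.

Lemma sat_restrict_restrict phi M (P : W M -> Prop)
    (Q : W (restrict M P) -> Prop) (S : W M -> Prop) :
  (forall v, S v <-> exists H : P v, Q (exist P v H)) ->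
  forall v (H : P v) (HQ : Q (exist P v H)) (HS : S v),
  sat phi (restrict (restrict M P) Q) (exist Q (exist P v H) HQ) <->
  sat phi (restrict M S) (exist S v HS).
Proof.
move=> SPQ v H HQ HS.
pose f (u : W (restrict (restrict M P) Q)) : W (restrict M S) :=
  let: exist (exist y Hy) HQy := u in exist S y (proj2 (SPQ y) (ex_intro _ Hy HQy)).
have f_epi : strong_epi _ _ f.
  split; [|by move=> a [[x ?] ?] [[y ?] ?]|by move=> p [[x ?] ?]].
  case=> y Sy; have [Hy HQy] := proj1 (SPQ y) Sy; exists (exist Q (exist P y Hy) HQy).
  by congr exist; apply: proof_irrelevance.
rewrite (sat_strong_epi phi f_epi); exact: sat_exist_irr.
Qed.

Definition EImp (a b : elform A) : elform A := ENeg (EAnd a (ENeg b)).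

Lemma EImpP M a b v : sat_el M (EImp a b) v <-> (sat_el M a v -> sat_el M b v).
Proof.
by split=> H /=; [move=> Ha; apply: NNPP => Hb; apply: H | case=> Ha []; apply: H].
Qed.

Definition ETop : elform A := EImp (EVar A 0) (EVar A 0).

Lemma ETopP M v : sat_el M ETop v.
Proof. exact/EImpP. Qed.

Lemma satG_ETop M G v : satG M G (fun _ => ETop) v.
Proof. by move=> i _ u _; apply: ETopP. Qed.

Lemma satG_EAnd M G f g v :
  satG M G (fun i => EAnd (f i) (g i)) v <-> satG M G f v /\ satG M G g v.
Proof.
split=> [H | [Hf Hg] i Gi u Ru]; last by split; [apply: Hf | apply: Hg].
by split=> i Gi u Ru; case: (H i Gi u Ru).
Qed.

Definition conjK (G : {set A}) (f : A -> elform A) : elform A :=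
  foldr (fun i acc => EAnd (EK i (f i)) acc) ETop (enum G).

Lemma conjKP M G f v : sat_el M (conjK G f) v <-> satG M G f v.
Proof.
have foldrP s : sat_el M (foldr (fun i acc => EAnd (EK i (f i)) acc) ETop s) v <->
                forall i, i \in s -> sat_el M (EK i (f i)) v.
  elim: s => [|j s IH] /=; first by split=> // _; apply: ETopP.
  rewrite IH; split=> [[Hj Hs] i | H].
  - by rewrite in_cons => /orP [/eqP -> | /Hs].
  - by split=> [|i si]; apply: H; rewrite in_cons ?eqxx ?si ?orbT.
by rewrite foldrP; split=> H i Hi; apply: H; move: Hi; rewrite mem_enum.
Qed.

Fixpoint relativize (t phi : elform A) : elform A :=
  match phi with
  | EVar p => EImp t (EVar A p)
  | ENeg f => EImp t (ENeg (relativize t f))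
  | EAnd f g => EAnd (relativize t f) (relativize t g)
  | EK a f => EImp t (EK a (relativize t f))
  end.

Section Relativization.
Variables (M : model A) (P : W M -> Prop) (t : elform A).
Hypothesis Pt : forall v, P v <-> sat_el M t v.

Lemma relativizeP phi v :
  sat_el M (relativize t phi) v <->
  forall H : P v, sat_el (restrict M P) phi (exist P v H).
Proof.
elim: phi v => [p|f IH|f IHf g IHg|a f IH] v; rewrite [relativize _ _]/= ?EImpP -?Pt //=.
- split=> H Pv Hf; apply: (H Pv).
  + by apply/IH => Pv'; rewrite (proof_irrelevance _ Pv' Pv).
  + by move/IH: Hf; apply.
- rewrite IHf IHg; split=> [[Hf Hg] Pv | H]; first by split; [apply: Hf | apply: Hg].
  by split=> Pv; case: (H Pv).
- split=> H Pv.
  + by case=> u Pu /= Ru; move/IH: (H Pv u Ru); apply.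
  + by move=> u Ru; apply/IH => Pu; apply: (H Pv (exist P u Pu) Ru).
Qed.

Lemma satG_relativize G f v (H : P v) :
  satG M G (fun i => relativize t (f i)) v <-> satG (restrict M P) G f (exist P v H).
Proof.
split=> Hf i Gi.
- by case=> u Pu /= Ru; move/relativizeP: (Hf i Gi u Ru); apply.
- by move=> u Ru; apply/relativizeP => Pu; apply: (Hf i Gi (exist P u Pu) Ru).
Qed.

End Relativization.

End CoalitionAnnouncements.

Theorem mainTheorem5 (A : finType) (G : {set A}) (phi : form A) :
  valid (Imp (DCoal G (DCoal G phi)) (Coal (~: G) phi)).
Proof.
move=> M w /= [outer not_coal]; apply: not_coal => psi Hpsi.
apply: NNPP => no_chi; apply: outer => psiG HpsiG.
exists psi, Hpsi => inner; apply: inner => psi2 Hpsi2.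
exists (fun _ => ETop A), (@satG_ETop A _ _ _) => Hphi; apply: no_chi.
set P := fun v => satG M G psiG v /\ satG M (~: G) psi v.
pose t := EAnd (conjK G psiG) (conjK (~: G) psi).
have Pt v : P v <-> sat_el M t v by rewrite /= !conjKP.
pose chi i := EAnd (psiG i) (relativize t (psi2 i)).
set S := fun v => satG M (~: G) psi v /\ satG M (~: ~: G) chi v.
have SPQ v : S v <-> exists H : P v,
    satG (restrict M P) G psi2 (exist P v H) /\
    satG (restrict M P) (~: G) (fun _ => ETop A) (exist P v H).
  rewrite /S setCK satG_EAnd; split.
  - case=> Hv [HG Hrel]; exists (conj HG Hv); split; last exact: satG_ETop.
    exact: (proj1 (satG_relativize _ _ _ Pt _ _ _ _) Hrel).
  - case=> -[HG Hv] [H2 _]; do !split=> //.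
    exact: (proj2 (satG_relativize _ _ _ Pt _ _ _ _) H2).
have [_ Hchi] : S w by apply/SPQ; exists (conj HpsiG Hpsi); split=> //; apply: satG_ETop.
exists chi, Hchi.
exact: (proj1 (sat_restrict_restrict phi _ _ SPQ _ _ _ _) Hphi).
Qed.
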